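(* Let $\lambda$ be a nonzero real number and let $n,r$ be positive integers. Then $$H_{n,\lambda}^{(r)}=\frac{1}{n!}\sum_{k=1}^{n}(-1)^{n-k}\langle r\rangle_{k-1,\lambda}\,k\,S_{1,\lambda}(n,k).$$ In particular, for $r=1$, $$H_{n,\lambda}=\frac{1}{n!}\sum_{k=1}^{n}(-1)^{n-k}k\,\langle 1\rangle_{k-1,\lambda}S_{1,\lambda}(n,k).$$
   Context: For real $x$ and integer $k\ge0$: $(x)_{0,\lambda}=1$, $(x)_{k,\lambda}=x(x-\lambda)\cdots(x-(k-1)\lambda)$; $\langle x\rangle_{0,\lambda}=1$, $\langle x\rangle_{k,\lambda}=x(x+\lambda)\cdots(x+(k-1)\lambda)$; $(x)_0=1$, $(x)_k=x(x-1)\cdots(x-k+1)$. The degenerate Stirling numbers of the first kind $S_{1,\lambda}(n,k)$ are defined by $(x)_{n}=\sum_{k=0}^{n}S_{1,\lambda}(n,k)(x)_{k,\lambda}$ for $n\ge 0$; equivalently $\frac{1}{k!}(\log_\lambda(1+t))^k=\sum_{n\ge k}S_{1,\lambda}(n,k)\frac{t^n}{n!}$ with $\log_\lambda(1+t)=\sum_{k\ge1}\lambda^{k-1}(1)_{k,1/\lambda}t^k/k!=((1+t)^\lambda-1)/\lambda$. The degenerate harmonic numbers are $H_{0,\lambda}=0$, $H_{n,\lambda}=\sum_{k=1}^{n}\frac{1}{\lambda}\binom{\lambda}{k}(-1)^{k-1}$ for $n\ge1$; the degenerate hyperharmonic numbers are $H_{n,\lambda}^{(1)}=H_{n,\lambda}$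 and $H_{n,\lambda}^{(r)}=\sum_{k=1}^{n}H_{k,\lambda}^{(r-1)}$ for $r\ge2$. *)

From mathcomp Require Import all_boot all_order all_algebra.
Set Implicit Arguments. Unset Strict Implicit. Unset Printing Implicit Defensive.
Import Order.TTheory GRing.Theory Num.Theory.
Local Open Scope ring_scope.

Section Defs.
Variable R : realFieldType.

Definition dfall (lam x : R) (k : nat) : R := \prod_(i < k) (x - i%:R * lam).
Definition drise (lam x : R) (k : nat) : R := \prod_(i < k) (x + i%:R * lam).
Definition ffall (x : R) (k : nat) : R := \prod_(i < k) (x - i%:R).

Definition gbinom (x : R) (k : nat) : R := ffall x k / (k`!)%:R.

Definition dharm (lam : R) (n : nat) : R :=
  \sum_(1 <= k < n.+1) lam^-1 * gbinom lam k * (-1) ^+ k.-1.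

(* degenerate hyperharmonic numbers H^{(r)}_{n,lam} for r >= 1;
   dhyper lam r n with r = 0 is (irrelevantly) set equal to H_{n,lam}. *)
Fixpoint dhyper (lam : R) (r n : nat) {struct r} : R :=
  match r with
  | 0 => dharm lam n
  | r'.+1 =>
      match r' with
      | 0 => dharm lam n
      | _ => \sum_(1 <= k < n.+1) dhyper lam r' k
      end
  end.

Definition is_deg_stirling1 (lam : R) (S : nat -> nat -> R) : Prop :=
  forall (n : nat) (x : R), ffall x n = \sum_(k < n.+1) S n k * dfall lam x k.

End Defs.

From mathcomp Require Import all_boot all_order all_algebra ring.
Import Order.TTheory GRing.Theory Num.Theory.
Set Implicit Arguments. Unset Strict Implicit. Unset Printing Implicit Defensive.
Local Open Scope ring_scope.

(* Both sides equal (((r multichoose n)) - ((r - lam multichoose n))) / lam,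
   where ((x multichoose n)) = <x>_n / n! with <x>_n the rising factorial.
   On the left, binom(lam, k) (-1)^(k-1) / lam = -((-lam multichoose k)) / lam,
   and the hockey-stick identity
   sum_(k <= n) ((x multichoose k)) = ((x + 1 multichoose n)) - 1 sums every
   level of the hyperharmonic recursion in closed form.  On the right,
   evaluate the defining relation of S_{1,lam} at -r and at -(r - lam),
   where (-x)_n = (-1)^n <x>_n and (-x)_{k,lam} = (-1)^k <x>_{k,lam}, and
   subtract, using <x>_{k,lam} - <x - lam>_{k,lam} = k lam <x>_{k-1,lam}. *)

Section DegenerateHyperharmonic.
Variable R : realFieldType.
Implicit Types (lam x : R).

Lemma drise0 lam x : drise lam x 0 = 1.
Proof. by rewrite /drise big_ord0. Qed.

Lemma drise_recr lam x k : drise lam x k.+1 = drise lam x k * (x + k%:R * lam).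
Proof. by rewrite /drise big_ord_recr. Qed.

Lemma drise_recl lam x k : drise lam x k.+1 = x * drise lam (x + lam) k.
Proof.
rewrite /drise big_ord_recl /= mul0r addr0; congr (_ * _).
by apply: eq_bigr => i _; rewrite /bump /= add1n -natr1; ring.
Qed.

Lemma dfall_recr lam x k : dfall lam x k.+1 = dfall lam x k * (x - k%:R * lam).
Proof. by rewrite /dfall big_ord_recr. Qed.

Lemma ffall_recr x k : ffall x k.+1 = ffall x k * (x - k%:R).
Proof. by rewrite /ffall big_ord_recr. Qed.

Lemma signr_mul_self n : (-1) ^+ n * (-1) ^+ n = 1 :> R.
Proof. by rewrite -expr2 sqrr_sign. Qed.

Lemma dfallN lam x k : dfall lam (- x) k = (-1) ^+ k * drise lam x k.
Proof.
elim: k => [|k IH]; first by rewrite /dfall drise0 big_ord0 mulr1.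
by rewrite dfall_recr IH drise_recr exprS; ring.
Qed.

Lemma ffallN x k : ffall (- x) k = (-1) ^+ k * drise 1 x k.
Proof.
elim: k => [|k IH]; first by rewrite /ffall drise0 big_ord0 mulr1.
by rewrite ffall_recr IH drise_recr exprS; ring.
Qed.

Lemma drise_fact n : drise 1 1 n = n`!%:R :> R.
Proof.
elim: n => [|n IH]; first by rewrite drise0.
by rewrite drise_recr IH factS natrM mulr1 addrC natr1 mulrC.
Qed.

Lemma driseB_shift lam x k :
  drise lam x k - drise lam (x - lam) k = k%:R * lam * drise lam x k.-1.
Proof.
case: k => [|k]; first by rewrite !drise0 subrr; ring.
by rewrite drise_recr drise_recl subrK -natr1; ring.
Qed.

Definition multichoose x n : R := drise 1 x n / n`!%:R.

Lemma multichoose1 n : multichoose 1 n = 1.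
Proof. by rewrite /multichoose drise_fact divff // pnatr_eq0 -lt0n fact_gt0. Qed.

Lemma multichooseS x n :
  multichoose (x + 1) n.+1 = multichoose (x + 1) n + multichoose x n.+1.
Proof.
rewrite /multichoose drise_recr [drise 1 x _]drise_recl factS natrM -natr1.
have fact_neq0 : n`!%:R != 0 :> R by rewrite pnatr_eq0 -lt0n fact_gt0.
have succ_neq0 : n%:R + 1 != 0 :> R by rewrite natr1 pnatr_eq0.
by field; rewrite fact_neq0 succ_neq0.
Qed.

Lemma sum_multichoose x n :
  \sum_(1 <= k < n.+1) multichoose x k = multichoose (x + 1) n - 1.
Proof.
elim: n => [|n IH]; first by rewrite big_geq // /multichoose drise0 divr1 subrr.
by rewrite big_nat_recr //= IH multichooseS; ring.
Qed.

Lemma gbinom_multichoose x k : gbinom x k = (-1) ^+ k * multichoose (- x) k.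
Proof. by rewrite /gbinom /multichoose -{1}[x]opprK ffallN mulrA. Qed.

Lemma dharmE lam n :
  dharm lam n = lam^-1 * (multichoose 1 n - multichoose (1 - lam) n).
Proof.
have termE k : (0 < k)%N ->
    lam^-1 * gbinom lam k * (-1) ^+ k.-1 = - (lam^-1 * multichoose (- lam) k).
  case: k => [//|k] _; rewrite gbinom_multichoose exprS /=.
  by transitivity (- (lam^-1 * multichoose (- lam) k.+1) * ((-1) ^+ k * (-1) ^+ k));
    [ring | rewrite signr_mul_self mulr1].
rewrite /dharm (eq_big_nat _ _ (fun k kn => termE k (andP kn).1)).
by rewrite sumrN -mulr_sumr sum_multichoose multichoose1 [1 - lam]addrC; ring.
Qed.

Lemma dhyperE lam r n : (0 < r)%N ->
  dhyper lam r n = lam^-1 * (multichoose r%:R n - multichoose (r%:R - lam) n).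
Proof.
elim: r n => [//|[|r] IH] n _; first exact: dharmE.
rewrite [LHS]/= (eq_bigr _ (fun k _ => IH k isT)) -mulr_sumr sumrB.
by rewrite !sum_multichoose -[r.+2%:R]natr1 [r.+1%:R + 1 - lam]addrAC; ring.
Qed.

Section DegenerateStirling.
Variables (lam : R) (S : nat -> nat -> R).
Hypothesis S_deg_stirling1 : is_deg_stirling1 lam S.

Lemma drise_deg_stirling1 x n :
  drise 1 x n = \sum_(k < n.+1) (-1) ^+ (n - k) * S n k * drise lam x k.
Proof.
rewrite -[LHS](signrMK n) -ffallN S_deg_stirling1 mulr_sumr.
apply: eq_bigr => k _; rewrite dfallN.
have -> : (-1) ^+ n = (-1) ^+ (n - k) * (-1) ^+ k :> R.
  by rewrite -exprD subnK // -ltnS.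
rewrite [S n k * _]mulrCA !mulrA -[_ * (-1) ^+ k * (-1) ^+ k]mulrA.
by rewrite signr_mul_self mulr1.
Qed.

Lemma deg_stirling1_weighted_sum x n :
  lam * \sum_(1 <= k < n.+1) (-1) ^+ (n - k) * drise lam x k.-1 * k%:R * S n k
  = drise 1 x n - drise 1 (x - lam) n.
Proof.
rewrite !drise_deg_stirling1 -sumrB.
under [RHS]eq_bigr => k _ do rewrite -mulrBr driseB_shift.
rewrite big_ord_recl /= mulr0n !mul0r mulr0 add0r big_add1 /= big_mkord mulr_sumr.
by apply: eq_bigr => k _; rewrite /bump /= add1n; ring.
Qed.

End DegenerateStirling.

End DegenerateHyperharmonic.

Theorem theorem3 (R : realFieldType) (lam : R) (S1 : nat -> nat -> R) :
  lam != 0 -> is_deg_stirling1 lam S1 ->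
  (forall n r : nat, (0 < n)%N -> (0 < r)%N ->
     dhyper lam r n =
       (n`!%:R)^-1 * \sum_(1 <= k < n.+1)
          (-1) ^+ (n - k) * drise lam r%:R k.-1 * k%:R * S1 n k)
  /\
  (forall n : nat, (0 < n)%N ->
     dharm lam n =
       (n`!%:R)^-1 * \sum_(1 <= k < n.+1)
          (-1) ^+ (n - k) * k%:R * drise lam 1 k.-1 * S1 n k).
Proof.
move=> lam_neq0 hS.
have hyper n r : (0 < r)%N -> dhyper lam r n =
    (n`!%:R)^-1 * \sum_(1 <= k < n.+1)
      (-1) ^+ (n - k) * drise lam r%:R k.-1 * k%:R * S1 n k.
  move=> r_gt0; rewrite dhyperE // /multichoose -mulrBl.
  by rewrite -(deg_stirling1_weighted_sum hS) !mulrA mulVf // mul1r mulrC.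
split=> [n r _ /hyper // | n _].
rewrite -[dharm lam n]/(dhyper lam 1 n) hyper //; congr (_ * _).
by apply: eq_bigr => k _; ring.
Qed.
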